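(* Let $p\ge 1$ and $c>0$ be constants, let $a>0$, and let $x_a:[0,\infty)\to\mathbb{R}$ be the unique solution of $$x'''+c\,x^p\, x''=0,\qquad x(0)=0=x'(0),\quad x''(0)=a$$ (which is defined on all of $[0,\infty)$). Then $\lim_{t\to\infty} x_a''(t)=0$, and the limit $h(a):=\lim_{t\to\infty} x_a'(t)$ exists, is finite and is positive. *)

From HB Require Import structures.
From mathcomp Require Export all_boot all_order all_algebra.
From mathcomp Require Export all_classical all_reals all_analysis.
Export Order.TTheory GRing.Theory Num.Theory.
Export numFieldNormedType.Exports.

From mathcomp Require Import ring lra.

(* The second derivative x'' stays positive: on [0, s] the coefficient c x^p is
   bounded by some K, so x''^2 e^(2Kt) is nondecreasing and x'' cannot vanish.
   Hence x' and x are positive and increasing, and c x^p >= k := c x(1)^p on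
   [1, +oo[, which makes x' + x''/k nonincreasing there and bounds x'.  A
   bounded nondecreasing function converges, and a nonnegative nonincreasing
   derivative of a bounded function tends to 0. *)

Local Open Scope classical_set_scope.
Local Open Scope ring_scope.

Lemma itv_oo_gt0 {R : numDomainType} {s t u : R} : 0 <= s -> u \in `]s, t[ -> 0 < u.
Proof. by rewrite in_itv /= => s_ge0 /andP[/(le_lt_trans s_ge0)]. Qed.

Lemma continuous_within_subitv {R : realType} {f : R -> R} {a s t : R} : a <= s ->
  {within `[a, +oo[, continuous f} -> {within `[s, t], continuous f}.
Proof. by move=> a_le_s; apply: continuous_subspaceW; apply: subset_itv. Qed.

Section mean_value_bounds.
Context {R : realType} {f df : R -> R} {a b : R}.
Hypothesis f_deriv : forall t, t \in `]a, b[ -> is_derive t 1 f (df t).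
Hypothesis f_cont : {within `[a, b], continuous f}.

Lemma derive_ge_increment m : a <= b -> (forall t, t \in `]a, b[ -> m <= df t) ->
  m * (b - a) <= f b - f a.
Proof.
rewrite le_eqVlt => /predU1P[<-|ab] df_ge; first by rewrite !subrr mulr0.
have [t tab ->] := MVT ab f_deriv f_cont.
by rewrite ler_pM2r ?df_ge ?subr_gt0.
Qed.

Lemma derive_le_increment m : a <= b -> (forall t, t \in `]a, b[ -> df t <= m) ->
  f b - f a <= m * (b - a).
Proof.
rewrite le_eqVlt => /predU1P[<-|ab] df_le; first by rewrite !subrr mulr0.
have [t tab ->] := MVT ab f_deriv f_cont.
by rewrite ler_pM2r ?df_le ?subr_gt0.
Qed.

Lemma derive_gt0_lt : a < b -> (forall t, t \in `]a, b[ -> 0 < df t) -> f a < f b.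
Proof.
move=> ab df_gt0; have [t tab eq_f] := MVT ab f_deriv f_cont.
by rewrite -subr_gt0 eq_f mulr_gt0 ?df_gt0 ?subr_gt0.
Qed.

Lemma derive_ge0_le : a <= b -> (forall t, t \in `]a, b[ -> 0 <= df t) -> f a <= f b.
Proof.
by move=> ab /(derive_ge_increment 0 ab); rewrite mul0r subr_ge0.
Qed.

Lemma derive_le0_ge : a <= b -> (forall t, t \in `]a, b[ -> df t <= 0) -> f b <= f a.
Proof.
by move=> ab /(derive_le_increment 0 ab); rewrite mul0r subr_le0.
Qed.

End mean_value_bounds.

Lemma is_derive_expR_scale {R : realType} (k t : R) :
  is_derive t 1 (fun s => expR (k * s)) (k * expR (k * t)).
Proof.
have := is_derive1_comp (is_derive_expR (k * t)) (is_deriveZ k (is_derive_id t 1)).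
by rewrite -[k%:A]/(k * 1) mulr1 mulrC.
Qed.

Lemma continuous_expR_scale {R : realType} (k : R) : continuous (fun s => expR (k * s)).
Proof.
move=> t; have [+ _] := is_derive_expR_scale k t.
by move=> /derivable1_diffP/differentiable_continuous.
Qed.

Lemma sqr_expR_ode_le {R : realType} {y g : R -> R} {K a b : R} : a <= b ->
  (forall t, t \in `]a, b[ -> is_derive t 1 y (- (g t * y t))) ->
  (forall t, t \in `]a, b[ -> g t <= K) ->
  {within `[a, b], continuous y} ->
  y a ^+ 2 * expR (2 * K * a) <= y b ^+ 2 * expR (2 * K * b).
Proof.
move=> ab y_deriv g_le y_cont.
pose h := y * y * (fun s => expR (2 * K * s)).
have h_deriv t : t \in `]a, b[ -> is_derive t 1 h
    ((y t * y t) * (2 * K * expR (2 * K * t)) +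
     expR (2 * K * t) * (y t * - (g t * y t) + y t * - (g t * y t))).
  move=> tab; apply: is_deriveM; last exact: is_derive_expR_scale.
  by apply: is_deriveM; exact: y_deriv.
apply: (derive_ge0_le h_deriv) => // [|t tab].
  move=> t; apply: continuousM; first by apply: continuousM; exact: y_cont.
  by apply: continuous_subspaceT; exact: continuous_expR_scale.
have -> : forall u v w : R, u * u * (2 * K * v) + v * (u * - (w * u) + u * - (w * u))
    = 2 * (u ^+ 2 * v) * (K - w) by move=> *; ring.
by rewrite mulr_ge0 ?subr_ge0 ?g_le // mulr_ge0 // mulr_ge0 ?sqr_ge0 ?expR_ge0.
Qed.

Lemma powR_bounded_on_itv {R : realType} {f : R -> R} {p a b : R} :
  0 <= p -> a <= b ->
  {within `[a, b], continuous f} -> exists K, forall t, t \in `[a, b] -> f t `^ p <= K.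
Proof.
move=> p0 ab f_cont; have [m _ f_le] := EVT_max ab f_cont.
exists (Num.max 1 (f m `^ p)) => t tab; rewrite le_max.
have [ft_lt0|ft_ge0] := ltP (f t) 0; first by rewrite lt0_powR1 // lexx.
by rewrite ge0_ler_powR ?orbT ?nnegrE ?f_le // (le_trans ft_ge0) ?f_le.
Qed.

Lemma nondecreasing_bounded_cvgr {R : realType} {f : R -> R} {a B : R} :
  {in `[a, +oo[ &, {homo f : s t / s <= t}} -> (forall t, a <= t -> f t <= B) ->
  exists l : R, f t @[t --> +oo] --> l.
Proof.
move=> f_ndecr f_le.
pose g t := f (Num.max a t).
have g_ndecr : nondecreasing_fun g.
  move=> s t st; apply: f_ndecr; last exact: le_max2.
  1,2: by rewrite in_itv /= le_max lexx.
have g_ub : has_ubound (range g).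
  by exists B => _ [t _ <-]; apply: f_le; rewrite le_max lexx.
exists (sup (range g)); apply: cvg_trans (nondecreasing_cvgr g_ndecr g_ub).
apply: near_eq_cvg; near=> r; rewrite /g max_r //.
Unshelve. all: by end_near.
Qed.

Lemma bounded_nonincreasing_derive_cvg0 {R : realType} {f df : R -> R} {a B : R} :
  (forall t, a < t -> is_derive t 1 f (df t)) -> {within `[a, +oo[, continuous f} ->
  {in `[a, +oo[ &, {homo df : s t /~ s <= t}} -> (forall t, a <= t -> 0 <= df t) ->
  (forall t, a <= t -> f t <= B) -> df t @[t --> +oo] --> 0.
Proof.
move=> f_deriv f_cont df_nincr df_ge0 f_le; apply/cvgrPdist_lt => e e_gt0.
have fa_le : f a <= B := f_le a (lexx a).
have ratio_ge0 : 0 <= (B - f a) / e by rewrite divr_ge0 ?subr_ge0 // ltW.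
(* chosen so that [df T * (T - a) <= f T - f a <= B - f a < e * (T - a)] *)
pose T := a + ((B - f a) / e + 1).
have aT : a < T by rewrite ltrDl ltr_wpDl.
have dfT_lt : df T < e.
  have f_deriv_aT t : t \in `]a, T[ -> is_derive t 1 f (df t).
    by rewrite in_itv => /andP[/f_deriv].
  have dfT_le t : t \in `]a, T[ -> df T <= df t.
    rewrite in_itv => /andP[a_lt_t t_lt_T].
    by apply: df_nincr; rewrite ?in_itv /= ?(ltW a_lt_t) ?(ltW aT) ?(ltW t_lt_T).
  have := derive_ge_increment f_deriv_aT (continuous_within_subitv (lexx a) f_cont)
    (df T) (ltW aT) dfT_le.
  have T_sub_a : T - a = (B - f a) / e + 1 by rewrite /T addrAC subrr add0r.
  rewrite -(ltr_pM2r (_ : 0 < T - a)) ?subr_gt0 // => /le_lt_trans; apply.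
  rewrite T_sub_a mulrDr mulrCA mulfV ?gt_eqF // mulr1.
  by have := f_le T (ltW aT); lra.
near=> t; rewrite sub0r normrN ger0_norm ?df_ge0 //.
by apply: le_lt_trans dfT_lt; apply: df_nincr; rewrite ?in_itv /= ?andbT ?(ltW aT).
Unshelve. all: by end_near.
Qed.

Section third_order_ode.
Context {R : realType}.
Variables (p c a : R) (x x1 x2 : R -> R).
Hypotheses (p_ge0 : 0 <= p) (c_gt0 : 0 < c) (a_gt0 : 0 < a).
Hypotheses (x_0 : x 0 = 0) (x1_0 : x1 0 = 0) (x2_0 : x2 0 = a).
Hypotheses (x_cont : {within `[0, +oo[, continuous x})
  (x1_cont : {within `[0, +oo[, continuous x1})
  (x2_cont : {within `[0, +oo[, continuous x2}).
Hypotheses (x_deriv : forall t : R, 0 < t -> is_derive t 1 x (x1 t))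
  (x1_deriv : forall t : R, 0 < t -> is_derive t 1 x1 (x2 t))
  (x2_deriv : forall t : R, 0 < t -> is_derive t 1 x2 (- (c * x t `^ p * x2 t))).

Lemma x2_gt0 (t : R) : 0 <= t -> 0 < x2 t.
Proof.
rewrite le_eqVlt => /predU1P[<-|t_gt0]; first by rewrite x2_0.
have [K xK] := powR_bounded_on_itv p_ge0 (ltW t_gt0)
  (continuous_within_subitv (lexx 0) x_cont).
have x2_neq0 s : s \in `[0, t] -> x2 s != 0.
  rewrite in_itv /= => /andP[s_ge0 s_le_t].
  have x2_deriv_s u : u \in `]0, s[ -> is_derive u 1 x2 (- (c * x u `^ p * x2 u)).
    by move=> /(itv_oo_gt0 (lexx 0)) /x2_deriv.
  have coef_le u : u \in `]0, s[ -> c * x u `^ p <= c * K.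
    rewrite in_itv /= => /andP[u_gt0 u_lt_s].
    by rewrite ler_pM2l // xK // in_itv /= (ltW u_gt0) (le_trans (ltW u_lt_s)).
  have := sqr_expR_ode_le (g := fun u => c * x u `^ p) s_ge0 x2_deriv_s coef_le
    (continuous_within_subitv (lexx 0) x2_cont).
  rewrite x2_0 mulr0 expR0 mulr1; apply: contraTneq => ->.
  by rewrite expr0n mul0r -ltNge exprn_gt0.
rewrite ltNge; apply/negP => x2t_le0.
have [s s_in x2s] : exists2 s, s \in `[0, t] & x2 s = 0.
  apply: IVT (ltW t_gt0) (continuous_within_subitv (lexx 0) x2_cont) _.
  by rewrite ge_min le_max x2t_le0 x2_0 (ltW a_gt0) orbT.
by move: (x2_neq0 s s_in); rewrite x2s eqxx.
Qed.

Lemma x1_gt0 (t : R) : 0 < t -> 0 < x1 t.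
Proof.
move=> t_gt0; rewrite -x1_0.
apply: (derive_gt0_lt (df := x2) _ (continuous_within_subitv (lexx 0) x1_cont) t_gt0).
- by move=> u /(itv_oo_gt0 (lexx 0)) /x1_deriv.
- by move=> u /(itv_oo_gt0 (lexx 0)) /ltW /x2_gt0.
Qed.

Lemma x_gt0 (t : R) : 0 < t -> 0 < x t.
Proof.
move=> t_gt0; rewrite -x_0.
apply: (derive_gt0_lt (df := x1) _ (continuous_within_subitv (lexx 0) x_cont) t_gt0).
- by move=> u /(itv_oo_gt0 (lexx 0)) /x_deriv.
- by move=> u /(itv_oo_gt0 (lexx 0)) /x1_gt0.
Qed.

Lemma x_nondecreasing : {in `[0, +oo[ &, {homo x : s t / s <= t}}.
Proof.
move=> s t; rewrite !in_itv /= !andbT => s_ge0 _ st.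
apply: (derive_ge0_le (df := x1) _ (continuous_within_subitv s_ge0 x_cont) st).
- by move=> u /(itv_oo_gt0 s_ge0) /x_deriv.
- by move=> u /(itv_oo_gt0 s_ge0) /x1_gt0 /ltW.
Qed.

Lemma x1_nondecreasing : {in `[0, +oo[ &, {homo x1 : s t / s <= t}}.
Proof.
move=> s t; rewrite !in_itv /= !andbT => s_ge0 _ st.
apply: (derive_ge0_le (df := x2) _ (continuous_within_subitv s_ge0 x1_cont) st).
- by move=> u /(itv_oo_gt0 s_ge0) /x1_deriv.
- by move=> u /(itv_oo_gt0 s_ge0) /ltW /x2_gt0 /ltW.
Qed.

Lemma x2_nonincreasing : {in `[0, +oo[ &, {homo x2 : s t /~ s <= t}}.
Proof.
move=> t s; rewrite !in_itv /= !andbT => _ s_ge0 st.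
apply: (derive_le0_ge (df := fun u => - (c * x u `^ p * x2 u)) _
  (continuous_within_subitv s_ge0 x2_cont) st).
- by move=> u /(itv_oo_gt0 s_ge0) /x2_deriv.
move=> u /(itv_oo_gt0 s_ge0) /ltW u_ge0.
by rewrite oppr_le0 !mulr_ge0 ?powR_ge0 ?(ltW c_gt0) // ltW // x2_gt0.
Qed.

Lemma x1_le_bound (t : R) : 0 <= t -> x1 t <= x1 1 + x2 1 / (c * x 1 `^ p).
Proof.
move=> t_ge0; set k := c * x 1 `^ p.
have k_gt0 : 0 < k by rewrite mulr_gt0 ?powR_gt0 ?x_gt0.
have x2k_ge0 u : 0 <= u -> 0 <= x2 u / k.
  by move=> /x2_gt0 /ltW x2_ge0; rewrite divr_ge0 // ltW.
have [t_lt1|t_ge1] := ltP t 1.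
  have [t_in one_in] : t \in `[0, +oo[ /\ (1 : R) \in `[0, +oo[.
    by split; rewrite in_itv /= ?andbT.
  apply: (le_trans (x1_nondecreasing _ _ t_in one_in (ltW t_lt1))).
  by rewrite lerDl x2k_ge0.
pose V := x1 + k^-1 \*: x2.
have : V t <= V 1.
  apply: (derive_le0_ge (df := fun u => x2 u + k^-1 *: - (c * x u `^ p * x2 u))
    _ _ t_ge1).
  - move=> u /(itv_oo_gt0 ler01) u_gt0.
    by apply: is_deriveD; [exact: x1_deriv | apply: is_deriveZ; exact: x2_deriv].
  - move=> u; apply: continuousD.
      exact: (continuous_within_subitv ler01 x1_cont).
    apply: continuousZ; first exact: cst_continuous.
    exact: (continuous_within_subitv ler01 x2_cont).
  move=> u; rewrite in_itv /= => /andP[u_gt1 _].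
  have u_gt0 : 0 < u := lt_trans ltr01 u_gt1.
  have k_le : k <= c * x u `^ p.
    rewrite ler_pM2l //; apply: ge0_ler_powR; rewrite ?nnegrE //.
    - exact: ltW (x_gt0 _ ltr01).
    - exact: ltW (x_gt0 _ u_gt0).
    by apply: x_nondecreasing; rewrite ?in_itv /= ?ltW.
  change (x2 u + k^-1 * - (c * x u `^ p * x2 u) <= 0).
  rewrite mulrN subr_le0 ler_pdivlMl // ler_pM2r //.
  exact: x2_gt0 (ltW u_gt0).
change (x1 t + k^-1 * x2 t <= x1 1 + k^-1 * x2 1 -> x1 t <= x1 1 + x2 1 / k).
by rewrite [k^-1 * x2 1]mulrC; apply: le_trans; rewrite lerDl mulrC x2k_ge0.
Qed.

Lemma x2_cvg0 : x2 t @[t --> +oo] --> 0.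
Proof.
apply: (bounded_nonincreasing_derive_cvg0 x1_deriv x1_cont x2_nonincreasing _
  x1_le_bound).
by move=> t /x2_gt0 /ltW.
Qed.

Lemma x1_cvg_gt0 : exists h : R, x1 t @[t --> +oo] --> h /\ 0 < h.
Proof.
have [h x1_h] := nondecreasing_bounded_cvgr x1_nondecreasing x1_le_bound.
exists h; split => //; apply: lt_le_trans (x1_gt0 _ ltr01) _.
apply: cvgr_to_ge x1_h _; near=> t.
by apply: x1_nondecreasing; rewrite ?in_itv /= ?andbT.
Unshelve. all: by end_near.
Qed.

End third_order_ode.

Theorem lemma2 (R : realType) (p c a : R) (x x1 x2 : R -> R) :
  1 <= p -> 0 < c -> 0 < a ->
  x 0 = 0 -> x1 0 = 0 -> x2 0 = a ->
  {within `[0, +oo[, continuous x} ->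
  {within `[0, +oo[, continuous x1} ->
  {within `[0, +oo[, continuous x2} ->
  (forall t : R, 0 < t -> is_derive t 1 x (x1 t)) ->
  (forall t : R, 0 < t -> is_derive t 1 x1 (x2 t)) ->
  (forall t : R, 0 < t -> is_derive t 1 x2 (- (c * (x t `^ p) * x2 t))) ->
  (x2 t @[t --> +oo] --> 0) /\
  (exists h : R, (x1 t @[t --> +oo] --> h) /\ 0 < h).
Proof.
move=> p_ge1 c_gt0 a_gt0 x_0 x1_0 x2_0 x_cont x1_cont x2_cont.
move=> x_deriv x1_deriv x2_deriv.
have p_ge0 : 0 <= p := le_trans ler01 p_ge1.
by split; [apply: (@x2_cvg0 _ p c a) | apply: (@x1_cvg_gt0 _ p c a)].
Qed.
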